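(* Let $(W,S)$ be a Coxeter group with Coxeter matrix $(m_{s,s'})_{(s,s')\in S\times S}$, and let $w\in W$. Let $C$ be a directed cycle in the edge-colored directed graph $\mathcal{R}(w)$. Let $c=[(s,t)]\in\mathfrak{M}/\sim$ be an equivalence class, and let $c^{\mathrm{op}}=[(t,s)]\in\mathfrak{M}/\sim$. Then: (a) The number of arcs colored $c$ appearing in $C$ equals the number of arcs colored $c^{\mathrm{op}}$ appearing in $C$. (b) The number of arcs whose color belongs to $\{c,c^{\mathrm{op}}\}$ appearing in $C$ is even.
   Context: A Coxeter group is a pair $(W,S)$ where $W$ is a group and $S$ a finite subset of $W$ such that there is a matrix $(m_{s,s'})\in\{1,2,3,\ldots,\infty\}^{S\times S}$ with $m_{s,s}=1$, $m_{s,t}=m_{t,s}\geq 2$ for distinct $s,t$, and $W$ is presented by generators $S$ and relations $(st)^{m_{s,t}}=1$ for all $(s,t)$ with $m_{s,t}\neq\infty$ (this is the Coxeter matrix; $m_{s,t}$ is the order of $st$). Let $\mathfrak{M}=\{(s,t)\in S\times S : s\neq t,\ m_{s,t}<\infty\}$. Define the equivalence relation $\sim$ on $\mathfrak{M}$ by $(s,t)\sim(s',t')$ iff there is $q\in W$ with $qsq^{-1}=s'$ and $qtq^{-1}=t'$; $[P]$ denotes the class of $P\in\mathfrak{M}$. A reduced expression for $w\in W$ is a tuple $(a_1,\ldots,a_k)$ of elements of $S$ with $w=a_1\cdots a_k$ and $k$ minimal. A factor of a word $(a_1,\ldots,a_k)$ is a contiguous subword $(a_{i+1},\ldots,a_{i+m})$.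 For $(s,t)\in\mathfrak{M}$ and reduced expressions $\vec a,\vec b$ of $w$, $\vec b$ is obtained from $\vec a$ by an $(s,t)$-braid move if $\vec b$ arises from $\vec a$ by replacing a factor of the form $(s,t,s,t,\ldots)$ ($m_{s,t}$ entries) by $(t,s,t,s,\ldots)$ ($m_{s,t}$ entries). The graph $\mathcal{R}(w)$ has as vertices the reduced expressions of $w$, and for every $(s,t)\in\mathfrak{M}$ and reduced expressions $\vec a,\vec b$ of $w$ such that $\vec b$ is obtained from $\vec a$ by an $(s,t)$-braid move, an arc from $\vec a$ to $\vec b$ colored $[(s,t)]$. *)

From mathcomp Require Import all_boot.
From mathcomp Require Import boolp.
Set Implicit Arguments. Unset Strict Implicit. Unset Printing Implicit Defensive.

Record group := Group {
  gcar :> Type;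
  gmul : gcar -> gcar -> gcar;
  gone : gcar;
  ginv : gcar -> gcar;
  gmulA : forall x y z, gmul x (gmul y z) = gmul (gmul x y) z;
  gmul1 : forall x, gmul gone x = x;
  gmulV : forall x, gmul (ginv x) x = gone }.

Fixpoint gpow (G : group) (x : G) (n : nat) : G :=
  if n is n'.+1 then gmul x (gpow x n') else gone G.

Definition group_hom (G H : group) (f : G -> H) : Prop :=
  forall x y, f (gmul x y) = gmul (f x) (f y).

Section Coxeter.
Variables (W : group) (S : finType) (sg : S -> W).
(* Coxeter matrix: [m s t = None] encodes m_{s,t} = infinity. *)
Variable (m : S -> S -> option nat).

Definition coxeter_relations (H : group) (f : S -> H) : Prop :=
  forall s t k, m s t = Some k -> gpow (gmul (f s) (f t)) k = gone H.

Definition wprod (l : seq S) : W := foldr (fun s acc => gmul (sg s) acc) (gone W) l.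

(* (W,S) is a Coxeter group with Coxeter matrix m: S is a finite subset of W
   (sg injective), m is a Coxeter matrix, and W is presented by generators S
   and relations (st)^{m_{s,t}} = 1 (generation + universal property). *)
Record coxeter_system : Prop := {
  cox_inj : injective sg;
  cox_diag : forall s, m s s = Some 1;
  cox_sym : forall s t, m s t = m t s;
  cox_offdiag : forall s t, s != t -> forall k, m s t = Some k -> 2 <= k;
  cox_rel : coxeter_relations sg;
  cox_gen : forall w : W, exists l, wprod l = w;
  cox_univ : forall (H : group) (f : S -> H), coxeter_relations f ->
     exists phi : W -> H, group_hom phi /\ forall s, phi (sg s) = f s }.

Definition inM (s t : S) : Prop := s != t /\ m s t <> None.

Definition pair_equiv (s t s' t' : S) : Prop :=
  exists q : W, gmul (gmul q (sg s)) (ginv q) = sg s' /\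
                gmul (gmul q (sg t)) (ginv q) = sg t'.

Definition reduced (w : W) (a : seq S) : Prop :=
  wprod a = w /\ forall b, wprod b = w -> size a <= size b.

Definition alt (s t : S) (n : nat) : seq S := mkseq (fun i => if odd i then t else s) n.

Definition braid_move (s t : S) (a b : seq S) : Prop :=
  exists k, m s t = Some k /\
    exists p q, a = p ++ alt s t k ++ q /\ b = p ++ alt t s k ++ q.

(* An rarc of R(w): from arc_src to arc_dst, obtained via an (arc_s,arc_t)-braid move;
   its color is the class [(arc_s, arc_t)]. *)
Record rarc := RArc { arc_src : seq S; arc_dst : seq S; arc_s : S; arc_t : S }.

Definition is_arc (w : W) (e : rarc) : Prop :=
  reduced w (arc_src e) /\ reduced w (arc_dst e) /\ inM (arc_s e) (arc_t e) /\
  braid_move (arc_s e) (arc_t e) (arc_src e) (arc_dst e).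

Definition directed_cycle (w : W) (C : seq rarc) : Prop :=
  0 < size C /\
  (forall e0 i, i < size C -> is_arc w (nth e0 C i)) /\
  (forall e0 i, i < size C ->
     arc_dst (nth e0 C i) = arc_src (nth e0 C (i.+1 %% size C))) /\
  uniq (map arc_src C).

Definition colored (s t : S) (e : rarc) : Prop := pair_equiv (arc_s e) (arc_t e) s t.

Definition ncolored (s t : S) (C : seq rarc) : nat := count (fun e => `[< colored s t e >]) C.

Definition ncolored2 (s t : S) (C : seq rarc) : nat :=
  count (fun e => `[< colored s t e \/ colored t s e >]) C.

End Coxeter.

From HB Require Import structures.
From Pilot Require Import Defs.
From mathcomp Require Import all_boot boolp zify.
Set Implicit Arguments. Unset Strict Implicit. Unset Printing Implicit Defensive.

(* The reflection sequence of a reduced word has no repetition, and an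
   [(s, t)]-braid move reverses one of its factors: the reflections of a
   conjugate [P W_{s,t} P^-1], listed from [P s P^-1] to [P t P^-1], so that
   the colour of the arc is read off the first and last entries of the factor.
   By Kilmoyer's description of [W_I ∩ U W_J U^-1], two such factors either
   have the same elements or share at most one reflection. Hence, along a
   directed cycle, the blocks with a given set of elements are traversed in one
   of two opposite orders, and an arc reverses exactly the order of its own
   block. Counting, block by block, the reversals from the [c]-order to the
   [c^op]-order and back gives (a). Either all arcs reversing a given block are
   coloured in [{c, c^op}] or none is, and each block is reversed an even
   number of times, which gives (b). *)

Section GroupTheory.
Variable G : group.
Local Notation "x * y" := (gmul x y).
Local Notation "x ^-1" := (ginv x).
Local Notation "1" := (gone G).

Lemma gmulVr (x : G) : x * x^-1 = 1.
Proof.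
have e : (x^-1)^-1 * x^-1 = 1 by apply: gmulV.
by rewrite -[x * _]gmul1 -e -gmulA [x^-1 * (x * x^-1)]gmulA gmulV gmul1.
Qed.

Lemma gmulr1 (x : G) : x * 1 = x.
Proof. by rewrite -(gmulV x) gmulA gmulVr gmul1. Qed.

Lemma gmulKl (x y : G) : x^-1 * (x * y) = y.
Proof. by rewrite gmulA gmulV gmul1. Qed.

Lemma gmulKr (x y : G) : y * x * x^-1 = y.
Proof. by rewrite -gmulA gmulVr gmulr1. Qed.

Lemma gmulKVr (x y : G) : y * x^-1 * x = y.
Proof. by rewrite -gmulA gmulV gmulr1. Qed.

Lemma gmulIl (x y z : G) : x * y = x * z -> y = z.
Proof. by move=> e; rewrite -(gmulKl x y) e gmulKl. Qed.

Lemma gmulIr (x y z : G) : y * x = z * x -> y = z.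
Proof. by move=> e; rewrite -(gmulKr x y) e gmulKr. Qed.

Lemma ginv_uniq (x y : G) : x * y = 1 -> y = x^-1.
Proof. by move=> e; apply: (@gmulIl x); rewrite e gmulVr. Qed.

Lemma ginvK (x : G) : (x^-1)^-1 = x.
Proof. by symmetry; apply: ginv_uniq; rewrite gmulV. Qed.

Lemma ginvM (x y : G) : (x * y)^-1 = y^-1 * x^-1.
Proof.
by symmetry; apply: ginv_uniq; rewrite -gmulA [y * _]gmulA gmulVr gmul1 gmulVr.
Qed.

Lemma ginv1 : 1^-1 = 1.
Proof. by symmetry; apply: ginv_uniq; rewrite gmul1. Qed.

Definition gconj (x y : G) := x * y * x^-1.

Lemma gconj_comp x y z : gconj x (gconj y z) = gconj (x * y) z.
Proof. by rewrite /gconj ginvM !gmulA. Qed.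

Lemma gconj_inj x : injective (gconj x).
Proof. by move=> y z; rewrite /gconj => /gmulIr /gmulIl. Qed.

Lemma gconj1g y : gconj 1 y = y.
Proof. by rewrite /gconj gmul1 ginv1 gmulr1. Qed.

Lemma gconjK x y : gconj x^-1 (gconj x y) = y.
Proof. by rewrite gconj_comp gmulV gconj1g. Qed.

Lemma gconjKV x y : gconj x (gconj x^-1 y) = y.
Proof. by rewrite gconj_comp gmulVr gconj1g. Qed.

Lemma gconjM x y z : gconj x (y * z) = gconj x y * gconj x z.
Proof. by rewrite /gconj !gmulA gmulKVr. Qed.

Lemma gconj1 x : gconj x 1 = 1.
Proof. by rewrite /gconj gmulr1 gmulVr. Qed.

End GroupTheory.

HB.instance Definition _ (G : group) := gen_eqMixin (gcar G).

Section SymmetricGroup.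
Variable X : Type.

Record bij := Bij {
  bij_fun :> X -> X; bij_inv : X -> X;
  bij_funK : cancel bij_fun bij_inv; bij_invK : cancel bij_inv bij_fun }.

Lemma bij_eq (p q : bij) : p =1 q -> p = q.
Proof.
case: p => f g fK gK; case: q => f' g' fK' gK' /= /funext ef; subst f'.
have eg : g = g' by apply: funext => x; rewrite -{1}(gK' x) fK.
by subst g'; rewrite (Prop_irrelevance fK fK') (Prop_irrelevance gK gK').
Qed.

Section Product.
Variables p q : bij.

Lemma bij_mul_funK : cancel (q \o p) (bij_inv p \o bij_inv q).
Proof. by move=> x /=; rewrite !bij_funK. Qed.

Lemma bij_mul_invK : cancel (bij_inv p \o bij_inv q) (q \o p).
Proof. by move=> x /=; rewrite !bij_invK. Qed.

Definition bij_mul : bij := Bij bij_mul_funK bij_mul_invK.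

End Product.

Definition bij_one : bij := @Bij id id (fun _ => erefl) (fun _ => erefl).
Definition bij_invg (p : bij) : bij := Bij (bij_invK p) (bij_funK p).

Lemma bij_mulA : forall p q r, bij_mul p (bij_mul q r) = bij_mul (bij_mul p q) r.
Proof. by move=> p q r; apply: bij_eq. Qed.

Lemma bij_mul1 : forall p, bij_mul bij_one p = p.
Proof. by move=> p; apply: bij_eq. Qed.

Lemma bij_mulV : forall p, bij_mul (bij_invg p) p = bij_one.
Proof. by move=> p; apply: bij_eq => x /=; rewrite bij_invK. Qed.

Definition sym_group : group := @Defs.Group bij bij_mul bij_one bij_invg bij_mulA bij_mul1 bij_mulV.

End SymmetricGroup.

Lemma mkseqD T (f : nat -> T) n1 n2 :
  mkseq f (n1 + n2) = mkseq f n1 ++ mkseq (fun i => f (n1 + i)) n2.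
Proof. by rewrite /mkseq iotaD map_cat add0n -[n1]addn0 iotaDl -map_comp addn0. Qed.

Lemma head_rev T (x0 : T) s : head x0 (rev s) = last x0 s.
Proof. by case/lastP: s => [|s x] //; rewrite rev_rcons last_rcons. Qed.

Lemma last_rev T (x0 : T) s : last x0 (rev s) = head x0 s.
Proof. by case: s => [|x s] //; rewrite rev_cons last_rcons. Qed.

Lemma sum_mod_shift (F : nat -> nat) n : 0 < n ->
  \sum_(i < n) F (i.+1 %% n) = \sum_(i < n) F i.
Proof.
case: n => // n _; rewrite big_ord_recr big_ord_recl /= modnn addnC; congr (_ + _).
by apply: eq_bigr => i _; rewrite modn_small // ltnS.
Qed.

Lemma count_sum_nth T (p : pred T) x0 (l : seq T) :
  count p l = \sum_(i < size l) p (nth x0 l i).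
Proof. by elim: l => [|x l IH]; rewrite ?big_ord0 // big_ord_recl /= IH. Qed.

Definition same_elems (T : eqType) (X Y : seq T) := all (mem Y) X && all (mem X) Y.

Lemma same_elemsP (T : eqType) (X Y : seq T) : reflect (X =i Y) (same_elems X Y).
Proof.
apply: (iffP andP) => [[/allP XY /allP YX] x|eqXY].
  by apply/idP/idP => [/XY|/YX].
by split; apply/allP => x; rewrite /= eqXY.
Qed.

(** * Reversing blocks along a cycle *)

Section BlockReversalCycle.
Variables (T : eqType) (n : nat) (L B : nat -> seq T).

Definition trace (X l : seq T) := [seq x <- l | x \in X].

Hypothesis n_gt0 : 0 < n.
Hypothesis trace_block : forall i, i < n -> trace (B i) (L i) = B i.
Hypothesis trace_block_next : forall i, i < n -> trace (B i) (L (i.+1 %% n)) = rev (B i).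
Hypothesis trace_other : forall i j, i < n -> j < n ->
  B j =i B i \/ trace (B j) (L (i.+1 %% n)) = trace (B j) (L i).

Lemma eq_trace (X Y : seq T) : X =i Y -> trace X =1 trace Y.
Proof. by move=> eqXY l; apply: eq_filter => x; rewrite eqXY. Qed.

Definition cls i := find (fun j => same_elems (B j) (B i)) (iota 0 n).

Lemma cls_lt i : i < n -> cls i < n.
Proof.
move=> lt_in; rewrite -[n in _ < n](size_iota 0) -has_find.
by apply/hasP; exists i; rewrite ?mem_iota //; apply/same_elemsP.
Qed.

Lemma same_cls i : i < n -> B (cls i) =i B i.
Proof.
move=> lt_in; apply/same_elemsP.
have := @nth_find _ 0 (fun j => same_elems (B j) (B i)) (iota 0 n).
by rewrite nth_iota ?cls_lt // add0n; apply; rewrite has_find size_iota cls_lt.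
Qed.

Lemma cls_eq i j : B i =i B j -> cls i = cls j.
Proof.
move=> eqij; apply: eq_find => k /=.
by apply/same_elemsP/same_elemsP => eqk x; rewrite eqk ?eqij // -eqij.
Qed.

Lemma cls_id i : i < n -> cls (cls i) = cls i.
Proof. by move=> lt_in; apply/cls_eq/same_cls. Qed.

(* Summing over one representative [j] of each class of blocks with equal
   elements (those with [cls j = j]), arc [i] only changes the term of its own
   class, whose traversal it reverses. *)
Definition potential (f : nat -> seq T -> nat) (l : seq T) :=
  \sum_(j < n | cls j == j) f j (trace (B j) l).

Lemma potential_step f i : i < n ->
  potential f (L (i.+1 %% n)) + f (cls i) (B i) = potential f (L i) + f (cls i) (rev (B i)).
Proof.
move=> lt_in; pose c := Ordinal (cls_lt lt_in).
have split_c l : potential f l =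
    f c (trace (B i) l) + \sum_(j < n | (cls j == j) && (j != c)) f j (trace (B j) l).
  by rewrite /potential (bigD1 c) ?cls_id // (eq_trace (same_cls lt_in)).
rewrite !split_c trace_block // trace_block_next //.
have -> : \sum_(j < n | (cls j == j) && (j != c)) f j (trace (B j) (L (i.+1 %% n))) =
          \sum_(j < n | (cls j == j) && (j != c)) f j (trace (B j) (L i)).
  apply: eq_bigr => j /andP [/eqP cls_j neq_jc].
  have [same_ji|->] // := trace_other lt_in (ltn_ord j).
  by move: neq_jc; rewrite -(inj_eq val_inj) /= -cls_j (cls_eq same_ji) eqxx.
by rewrite /=; lia.
Qed.

Lemma reversal_balance f :
  \sum_(i < n) f (cls i) (B i) = \sum_(i < n) f (cls i) (rev (B i)).
Proof.
have : \sum_(i < n) (potential f (L (i.+1 %% n)) + f (cls i) (B i)) =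
       \sum_(i < n) (potential f (L i) + f (cls i) (rev (B i))).
  by apply: eq_bigr => i _; apply: potential_step.
rewrite !big_split /= (sum_mod_shift (fun i => potential f (L i))) //.
by move/eqP; rewrite eqn_add2l => /eqP.
Qed.

Lemma trace_two_valued j i : j < n -> i < n ->
  trace (B j) (L i) \in [:: trace (B j) (L 0); rev (trace (B j) (L 0))].
Proof.
move=> lt_jn; elim: i => [|i IH] lt_in; first exact: mem_head.
have lt_i : i < n by apply: ltnW.
rewrite -(modn_small lt_in).
have [same_ji|->] := trace_other lt_i lt_jn; last exact: IH.
move: (IH lt_i); rewrite !(eq_trace same_ji) trace_block // trace_block_next //.
by move: (trace _ _) => X; rewrite !inE => /orP [] /eqP ->; rewrite ?revK eqxx ?orbT.
Qed.

Lemma sum_block_sym_even (q : seq T -> bool) :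
  (forall X, q (rev X) = q X) -> (forall i, i < n -> B i != rev (B i)) ->
  ~~ odd (\sum_(i < n) q (B i)).
Proof.
move=> q_rev B_asym.
(* [f c] detects the blocks of class [c] traversed in their initial order; by
   [trace_two_valued] and asymmetry exactly one of [B i], [rev (B i)] is. *)
pose f j X : nat := q X && (X == trace (B j) (L 0)).
have split_q i : i < n -> q (B i) = f (cls i) (B i) + f (cls i) (rev (B i)) :> nat.
  move=> lt_in; have := trace_two_valued (cls_lt lt_in) lt_in.
  rewrite /f q_rev (eq_trace (same_cls lt_in)) trace_block //.
  move: (trace _ _) (B i) (B_asym i lt_in) => X Y asym.
  rewrite !inE => /orP [] /eqP eqY.
    by rewrite -eqY eqxx eq_sym (negbTE asym); case: (q Y).
  have -> : X = rev Y by rewrite eqY revK.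
  by rewrite eqxx (negbTE asym); case: (q Y).
rewrite (eq_bigr (fun i : 'I_n => f (cls i) (B i) + f (cls i) (rev (B i)))) /=;
  last by move=> i _; apply: split_q.
by rewrite big_split /= -reversal_balance addnn odd_double.
Qed.

End BlockReversalCycle.

(** * Words and reflection sequences *)

Section CoxeterWords.
Variables (W : group) (S : finType) (sg : S -> W) (m : S -> S -> option nat).
Hypothesis HW : coxeter_system sg m.
Local Notation "x * y" := (gmul x y).
Local Notation "x ^-1" := (ginv x).
Local Notation "1" := (gone W).
Local Notation wp := (wprod sg).
Local Notation conj := (@gconj W).

Lemma sg_invol s : sg s * sg s = 1.
Proof. by have := cox_rel HW (cox_diag HW s); rewrite /= gmulr1. Qed.

Lemma ginv_sg s : (sg s)^-1 = sg s.
Proof. by symmetry; apply: ginv_uniq; apply: sg_invol. Qed.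

Lemma conj_sgK s x : conj (sg s) (conj (sg s) x) = x.
Proof. by rewrite gconj_comp sg_invol gconj1g. Qed.

Lemma wprod1 s : wp [:: s] = sg s.
Proof. exact: gmulr1. Qed.

Lemma wprod_cat a b : wp (a ++ b) = wp a * wp b.
Proof. by elim: a => [|x a IH] /=; rewrite ?gmul1 // IH gmulA. Qed.

Lemma wprod_rev a : wp (rev a) = (wp a)^-1.
Proof.
elim: a => [|x a IH]; first by rewrite /= ginv1.
by rewrite rev_cons -cats1 wprod_cat IH wprod1 /= ginvM ginv_sg.
Qed.

(* The reflection sequence [t_1, ..., t_k] of a word [a_1 ... a_k], with
   [t_i = a_1 ... a_(i-1) a_i a_(i-1) ... a_1]. *)
Fixpoint refl_seq (a : seq S) : seq W :=
  if a is x :: a' then sg x :: map (conj (sg x)) (refl_seq a') else [::].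

Lemma size_refl_seq a : size (refl_seq a) = size a.
Proof. by elim: a => //= x a IH; rewrite size_map IH. Qed.

Lemma refl_seq_cat a b : refl_seq (a ++ b) = refl_seq a ++ map (conj (wp a)) (refl_seq b).
Proof.
elim: a => [|x a IH] /=; first by rewrite (eq_map (@gconj1g W)) map_id.
by rewrite IH map_cat -map_comp; congr (_ :: _ ++ _); apply: eq_map => y /=; rewrite gconj_comp.
Qed.

Lemma count_map_conj_sg s x l :
  count_mem x (map (conj (sg s)) l) = count_mem (conj (sg s) x) l.
Proof.
by rewrite count_map; apply: eq_count => y /=; apply/eqP/eqP => [<-|->]; rewrite conj_sgK.
Qed.

Definition del_nth (i : nat) (a : seq S) := take i a ++ drop i.+1 a.

Lemma size_del_nth i a : i < size a -> size (del_nth i a) = (size a).-1.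
Proof. by move=> lt_ia; rewrite /del_nth size_cat size_take size_drop lt_ia; lia. Qed.

Lemma mem_del_nth x i a : x \in del_nth i a -> x \in a.
Proof. by rewrite /del_nth mem_cat => /orP [/mem_take|/mem_drop]. Qed.

Lemma all_del_nth P i a : all P a -> all P (del_nth i a).
Proof. by move=> /allP Pa; apply/allP => x /mem_del_nth /Pa. Qed.

Lemma del_nth_catl i a b : i < size a -> del_nth i (a ++ b) = del_nth i a ++ b.
Proof.
rewrite /del_nth take_cat drop_cat => lt_ia; rewrite lt_ia.
case: ltnP => le_ai; first by rewrite catA.
have -> : size a = i.+1 by apply/eqP; rewrite eqn_leq le_ai lt_ia.
by rewrite subnn drop0 -catA drop_oversize.
Qed.

Lemma del_nth_catr j a b : del_nth (size a + j) (a ++ b) = a ++ del_nth j b.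
Proof.
rewrite /del_nth take_cat drop_cat ltnNge leq_addr /= addKn.
by rewrite ltnNge (leq_trans (leq_addr _ _) (leqnSn _)) /= -addnS addKn catA.
Qed.

Lemma refl_seq_del_nth a i :
  i < size a -> nth 1 (refl_seq a) i * wp a = wp (del_nth i a).
Proof.
elim: a i => [|x a IH] [|i] //= lt_ia; first by rewrite /del_nth /= drop0 gmulA sg_invol gmul1.
rewrite (nth_map 1) ?size_refl_seq // /gconj ginv_sg -[_ * sg x * _]gmulA.
by rewrite [sg x * (sg x * _)]gmulA sg_invol gmul1 -gmulA IH.
Qed.

Lemma altS (s t : S) n : alt s t n.+1 = s :: alt t s n.
Proof.
rewrite /alt -addn1 addnC mkseqD /=; congr (_ :: _).
by apply: eq_mkseq => i /=; case: (odd i).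
Qed.

Lemma size_alt (s t : S) n : size (alt s t n) = n.
Proof. exact: size_mkseq. Qed.

Lemma nth_alt (s t : S) n i x0 : i < n -> nth x0 (alt s t n) i = if odd i then t else s.
Proof. exact: nth_mkseq. Qed.

Lemma altD (s t : S) n1 n2 :
  alt s t (n1 + n2) = alt s t n1 ++ (if odd n1 then alt t s n2 else alt s t n2).
Proof. by elim: n1 s t => [|n1 IH] s t //; rewrite addSn !altS IH /=; case: (odd n1). Qed.

Lemma wprod_alt_double (s t : S) k : wp (alt s t k.*2) = gpow (sg s * sg t) k.
Proof. by elim: k => [|k IH] //; rewrite doubleS !altS /= IH gmulA. Qed.

Lemma alt_oddS (s t : S) i : alt s t i.+1.*2.+1 = s :: (alt t s i.*2.+1 ++ [:: s]).
Proof. by rewrite doubleS altS -[i.*2.+2]addn1 altD /= odd_double. Qed.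

Lemma conj_sg_alt (s t : S) i : conj (sg s) (wp (alt t s i.*2.+1)) = wp (alt s t i.+1.*2.+1).
Proof. by rewrite alt_oddS /= wprod_cat wprod1 /gconj ginv_sg !gmulA. Qed.

Lemma refl_seq_alt (s t : S) n :
  refl_seq (alt s t n) = mkseq (fun i => wp (alt s t i.*2.+1)) n.
Proof.
elim: n s t => [|n IH] s t //.
rewrite altS /= IH -[n.+1]add1n mkseqD /= gmulr1 /mkseq -map_comp; congr (_ :: _).
by apply: eq_map => i /=; rewrite conj_sg_alt.
Qed.

Definition is_refl (x : W) := exists q s, x = conj q (sg s).

Lemma is_refl_conj q x : is_refl x -> is_refl (conj q x).
Proof. by move=> [q' [s ->]]; exists (q * q'), s; rewrite gconj_comp. Qed.

Lemma refl_seq_refl a x : x \in refl_seq a -> is_refl x.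
Proof.
elim: a x => [|y a IH] x //=; rewrite inE => /orP [/eqP ->|].
  by exists 1, y; rewrite gconj1g.
by case/mapP => z /IH z_refl ->; apply: is_refl_conj.
Qed.

Lemma refl_invol x : is_refl x -> x * x = 1.
Proof. by move=> [q [s ->]]; rewrite -gconjM sg_invol gconj1. Qed.

Lemma refl_inv x : is_refl x -> x^-1 = x.
Proof. by move=> x_refl; symmetry; apply: ginv_uniq; apply: refl_invol. Qed.

Lemma alt_odd_refl (s t : S) i : is_refl (wp (alt s t i.*2.+1)).
Proof.
apply: (@refl_seq_refl (alt s t i.+1)).
by rewrite refl_seq_alt -[i.+1]addn1 mkseqD mem_cat /= inE addn0 eqxx orbT.
Qed.

Section DihedralPeriod.
Variables (s t : S) (k : nat).
Hypothesis st_order : gpow (sg s * sg t) k = 1.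

Lemma wprod_alt_period n : wp (alt s t (k.*2 + n)) = wp (alt s t n).
Proof. by rewrite altD odd_double wprod_cat wprod_alt_double st_order gmul1. Qed.

Lemma wprod_alt_period_mul q r : wp (alt s t (q * k + r).*2.+1) = wp (alt s t r.*2.+1).
Proof.
elim: q => [|q IH]; first by rewrite mul0n add0n.
by rewrite mulSn -addnA doubleD -addnS wprod_alt_period.
Qed.

Lemma wprod_alt_swap i : i < k ->
  wp (alt t s i.*2.+1) = wp (alt s t (k - i.+1).*2.+1).
Proof.
move=> lt_ik.
have split_k : alt s t k.*2 = alt s t (k - i.+1).*2.+1 ++ alt t s i.*2.+1.
  have -> : k.*2 = (k - i.+1).*2.+1 + i.*2.+1.
    by rewrite addSn addnS -doubleD -!doubleS -addnS subnK.
  by rewrite altD /= odd_double.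
have := st_order; rewrite -wprod_alt_double split_k wprod_cat => /ginv_uniq ->.
by rewrite refl_inv //; apply: alt_odd_refl.
Qed.

Lemma refl_seq_alt_swap : refl_seq (alt t s k) = rev (refl_seq (alt s t k)).
Proof.
apply: (@eq_from_nth _ 1); first by rewrite size_rev !size_refl_seq !size_alt.
move=> i; rewrite size_refl_seq size_alt => lt_ik.
rewrite nth_rev ?size_refl_seq ?size_alt // !refl_seq_alt !nth_mkseq //; last by lia.
by rewrite wprod_alt_swap // subnSK.
Qed.

Lemma rev_alt : rev (alt t s k) = if odd k then alt t s k else alt s t k.
Proof.
apply: (@eq_from_nth _ s); first by rewrite size_rev; case: ifP; rewrite !size_alt.
move=> i; rewrite size_rev size_alt => lt_ik.
rewrite nth_rev ?size_alt // nth_alt; last by lia.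
have -> : odd (k - i.+1) = ~~ (odd k (+) odd i).
  have := congr1 odd (subnK lt_ik); rewrite oddD /=.
  by case: (odd k); case: (odd i); case: (odd (k - i.+1)).
by case: (odd k); rewrite nth_alt //=; case: (odd i).
Qed.

Lemma braid_relation : wp (alt s t k) = wp (alt t s k).
Proof.
have split_k : alt s t k.*2 = alt s t k ++ rev (alt t s k) by rewrite rev_alt -addnn altD.
have := st_order; rewrite -wprod_alt_double split_k wprod_cat wprod_rev => /ginv_uniq.
by move=> /(congr1 (@ginv W)); rewrite !ginvK.
Qed.

Lemma last_refl_seq_alt : 0 < k -> last 1 (refl_seq (alt s t k)) = sg t.
Proof.
move=> k_gt0; rewrite -nth_last size_refl_seq size_alt refl_seq_alt nth_mkseq ?prednK //.
by rewrite -subn1 -wprod_alt_swap //= gmulr1.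
Qed.

End DihedralPeriod.

(** * Tits' representation *)

(* The bit of [tits_word a (x, b)] records the parity of the occurrences of [x]
   in [refl_seq a] ([tits_wordE]); the Coxeter relations make [tits_word]
   factor through [W]. *)
Definition tits_act (s : S) (xb : W * bool) : W * bool :=
  (conj (sg s) xb.1, xb.2 (+) (xb.1 == sg s)).

Lemma tits_actK s : involutive (tits_act s).
Proof.
case=> x b; rewrite /tits_act /= conj_sgK; congr pair.
have -> : (conj (sg s) x == sg s) = (x == sg s).
  have conj_ss : conj (sg s) (sg s) = sg s by rewrite /gconj sg_invol gmul1 ginv_sg.
  by rewrite -{2}conj_ss (inj_eq (@gconj_inj W _)).
by rewrite -addbA addbb addbF.
Qed.

Definition tits_perm (s : S) : sym_group (W * bool) := Bij (tits_actK s) (tits_actK s).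

Definition tits_word (a : seq S) : sym_group (W * bool) :=
  foldr (fun s acc => gmul (tits_perm s) acc) (gone _) a.

Lemma tits_wordE a x b :
  tits_word a (x, b) = (conj (wp a)^-1 x, b (+) odd (count_mem x (refl_seq a))).
Proof.
elim: a x b => [|s a IH] x b /=; first by rewrite ginv1 gconj1g addbF.
rewrite IH /tits_act /= count_map_conj_sg gconj_comp ginvM ginv_sg; congr pair.
by rewrite oddD addbA eq_sym; case: (sg s == x).
Qed.

Lemma tits_perm_relations : coxeter_relations m tits_perm.
Proof.
move=> s t k st_k.
have st_order : gpow (sg s * sg t) k = 1 := cox_rel HW st_k.
have -> : gpow (gmul (tits_perm s) (tits_perm t)) k = tits_word (alt s t k.*2).
  elim: k {st_k st_order} => [|k IH] //; rewrite doubleS !altS /= IH.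
  exact: (esym (bij_mulA _ _ _)).
apply: bij_eq => -[x b].
rewrite tits_wordE wprod_alt_double st_order ginv1 gconj1g /=.
rewrite refl_seq_alt -addnn mkseqD count_cat.
have -> : mkseq (fun i => wp (alt s t (k + i).*2.+1)) k = mkseq (fun i => wp (alt s t i.*2.+1)) k.
  by apply: eq_mkseq => i; rewrite doubleD -addnS wprod_alt_period.
by rewrite addnn odd_double addbF.
Qed.

Lemma refl_seq_count_parity a b x : wp a = wp b ->
  odd (count_mem x (refl_seq a)) = odd (count_mem x (refl_seq b)).
Proof.
move=> eq_ab.
have [phi [phi_hom phi_sg]] := cox_univ HW tits_perm_relations.
have phi_word c : phi (wp c) = tits_word c.
  have phi1 : phi 1 = gone _.
    have e : gmul (phi 1) (phi 1) = phi 1 by rewrite -phi_hom gmul1.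
    by rewrite -(gmulKl (phi 1) (phi 1)) e gmulV.
  by elim: c => [|s c IH] //=; rewrite phi_hom phi_sg IH.
have := congr1 (fun p : sym_group _ => (p (x, false)).2) (congr1 phi eq_ab).
by rewrite /= !phi_word !tits_wordE.
Qed.

Lemma sg_neq1 s : sg s <> 1.
Proof.
move=> s1; have /= := @refl_seq_count_parity [:: s] [::] (sg s).
by rewrite eqxx gmulr1 s1 => /(_ erefl).
Qed.

Lemma refl_neq1 x : is_refl x -> x <> 1.
Proof. by move=> [q [s ->]] /(congr1 (conj q^-1)); rewrite gconjK gconj1; apply: sg_neq1. Qed.

(** * Reduced words *)

Lemma uniq_refl_seq_size a b :
  uniq (refl_seq a) -> uniq (refl_seq b) -> wp a = wp b -> size a = size b.
Proof.
move=> Ua Ub eq_ab.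
have eq_mem : refl_seq a =i refl_seq b.
  move=> x; have := refl_seq_count_parity x eq_ab.
  by rewrite !count_uniq_mem //; case: (x \in refl_seq a); case: (x \in refl_seq b).
by rewrite -size_refl_seq -(size_refl_seq b); apply/perm_size/uniq_perm.
Qed.

Lemma deletion_condition a : ~~ uniq (refl_seq a) ->
  exists i j, [/\ i < j, j < size a & wp a = wp (del_nth i (del_nth j a))].
Proof.
move=> /(uniqPn 1) [i [j [lt_ij]]]; rewrite size_refl_seq => lt_ja eq_ij.
exists i, j; split=> //.
have nth_del : nth 1 (refl_seq (del_nth j a)) i = nth 1 (refl_seq a) i.
  rewrite -[in RHS](cat_take_drop j a) /del_nth !refl_seq_cat !nth_cat.
  by rewrite size_refl_seq size_take lt_ja lt_ij.
rewrite -refl_seq_del_nth; last by rewrite size_del_nth //; lia.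
rewrite nth_del -refl_seq_del_nth // -eq_ij gmulA eq_ij refl_invol ?gmul1 //.
by apply: (@refl_seq_refl a); rewrite mem_nth // size_refl_seq.
Qed.

Lemma exists_uniq_subword a : exists b,
  [/\ uniq (refl_seq b), wp b = wp a, size b <= size a & {subset b <= a}].
Proof.
have [n] := ubnP (size a); elim: n a => // n IH a lt_an.
have [Ua|/deletion_condition [i [j [lt_ij lt_ja eq_a]]]] := boolP (uniq (refl_seq a)).
  by exists a; split=> // x.
have size_del : size (del_nth i (del_nth j a)) = (size a).-2.
  by rewrite !size_del_nth //; lia.
have [|b [Ub eq_b size_b sub_b]] := IH (del_nth i (del_nth j a)); first by lia.
exists b; split=> //; first by rewrite eq_b.
  by lia.
by move=> x /sub_b /mem_del_nth /mem_del_nth.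
Qed.

Lemma uniq_refl_seq_min a b : uniq (refl_seq a) -> wp b = wp a -> size a <= size b.
Proof.
move=> Ua eq_ba; have [b' [Ub' eq_b' size_b' _]] := exists_uniq_subword b.
by rewrite -(uniq_refl_seq_size Ub' Ua) // eq_b'.
Qed.

Lemma min_uniq_refl_seq a : (forall b, wp b = wp a -> size a <= size b) -> uniq (refl_seq a).
Proof.
move=> a_min; apply/negP => /negP /deletion_condition [i [j [lt_ij lt_ja eq_a]]].
by have := a_min _ (esym eq_a); rewrite !size_del_nth //; lia.
Qed.

Lemma refl_seq_cat_not_uniq a b :
  uniq (refl_seq a) -> uniq (refl_seq b) -> ~~ uniq (refl_seq (a ++ b)) ->
  exists i j, [/\ i < size a, j < size b & wp (a ++ b) = wp (del_nth i a ++ del_nth j b)].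
Proof.
move=> Ua Ub; rewrite refl_seq_cat cat_uniq Ua map_inj_uniq ?Ub; last exact: gconj_inj.
rewrite andbT /= negbK => /hasP [_ /mapP [y yb ->] ya].
set i := index (conj (wp a) y) (refl_seq a); set j := index y (refl_seq b).
have lt_ia : i < size a by rewrite -(size_refl_seq a) index_mem.
have lt_jb : j < size b by rewrite -(size_refl_seq b) index_mem.
exists i, j; split=> //.
have y_refl : is_refl (conj (wp a) y) by apply: (@refl_seq_refl a).
have nth_ab : nth 1 (refl_seq (a ++ b)) (size a + j) = conj (wp a) y.
  by rewrite refl_seq_cat nth_cat size_refl_seq ltnNge leq_addr /= addKn (nth_map 1)
     ?size_refl_seq // nth_index.
have nth_adb : nth 1 (refl_seq (a ++ del_nth j b)) i = conj (wp a) y.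
  by rewrite refl_seq_cat nth_cat size_refl_seq lt_ia nth_index.
have := @refl_seq_del_nth (a ++ del_nth j b) i; rewrite nth_adb del_nth_catl // => <-;
  last by rewrite size_cat (leq_trans lt_ia) ?leq_addr.
have := @refl_seq_del_nth (a ++ b) (size a + j); rewrite nth_ab del_nth_catr => <-;
  last by rewrite size_cat ltn_add2l.
by rewrite gmulA refl_invol // gmul1.
Qed.

Lemma uniq_refl_seq_behead x a : uniq (refl_seq (x :: a)) -> uniq (refl_seq a).
Proof. by move=> /= /andP [_]; rewrite map_inj_uniq //; apply: gconj_inj. Qed.

Lemma reduced_uniq_refl_seq w a : reduced sg w a -> uniq (refl_seq a).
Proof. by move=> [<- a_min]; apply: min_uniq_refl_seq. Qed.

(** * Minimal double coset words *)

Lemma ex_min_size_word (Q : seq S -> Prop) : (exists d, Q d) ->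
  exists d, Q d /\ forall d', Q d' -> size d <= size d'.
Proof.
move=> [d Qd].
have ex_size : exists n, `[< exists d, Q d /\ size d = n >].
  by exists (size d); apply/asboolP; exists d.
case: (ex_minnP ex_size) => n /asboolP [d0 [Qd0 <-]] min_n.
by exists d0; split=> // d' Qd'; apply: min_n; apply/asboolP; exists d'.
Qed.

Lemma wprod_one_letter (r : S) e : all (pred1 r) e -> wp e = 1 \/ wp e = sg r.
Proof.
elim: e => [|x e IH] /=; first by left.
by move=> /andP [/eqP -> /IH [->|->]]; [right; rewrite gmulr1 | left; rewrite sg_invol].
Qed.

Section MinimalDoubleCosetWord.
Variables (pI pJ : pred S) (U0 : W) (cu : seq S).

Definition in_dcoset (z : W) :=
  exists x y, [/\ all pI x, all pJ y & z = wp x * U0 * wp y].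

Hypothesis cu_dcoset : in_dcoset (wp cu).
Hypothesis cu_min : forall d, in_dcoset (wp d) -> size cu <= size d.
Local Notation U := (wp cu).

Lemma in_dcosetM c z d : all pI c -> all pJ d -> in_dcoset z -> in_dcoset (wp c * z * wp d).
Proof.
move=> Ic Jd [x [y [Ix Jy ->]]]; exists (c ++ x), (y ++ d).
by rewrite !all_cat Ic Ix Jy Jd !wprod_cat !gmulA.
Qed.

Lemma not_dcoset_del_nth j : j < size cu -> ~ in_dcoset (wp (del_nth j cu)).
Proof. by move=> lt_j /cu_min; rewrite size_del_nth //; lia. Qed.

Lemma uniq_refl_seq_min_dcoset : uniq (refl_seq cu).
Proof. by apply: min_uniq_refl_seq => b eq_b; apply: cu_min; rewrite eq_b. Qed.

Lemma uniq_refl_seq_cat_dcosetl c : all pI c -> uniq (refl_seq c) -> uniq (refl_seq (c ++ cu)).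
Proof.
move=> Ic Uc; apply/negP => /negP not_uniq.
have [i [j [lt_i lt_j]]] := refl_seq_cat_not_uniq Uc uniq_refl_seq_min_dcoset not_uniq.
rewrite wprod_cat [wp (del_nth _ _ ++ _)]wprod_cat => eq_del; apply: (not_dcoset_del_nth lt_j).
have -> : wp (del_nth j cu) = wp (rev (del_nth i c) ++ c) * U * wp [::].
  by rewrite wprod_cat wprod_rev gmulr1 -gmulA eq_del gmulKl.
by apply: in_dcosetM; rewrite ?all_cat ?all_rev ?Ic ?all_del_nth.
Qed.

Lemma uniq_refl_seq_cat_dcosetr d : all pJ d -> uniq (refl_seq d) -> uniq (refl_seq (cu ++ d)).
Proof.
move=> Jd Ud; apply/negP => /negP not_uniq.
have [i [j [lt_i lt_j]]] := refl_seq_cat_not_uniq uniq_refl_seq_min_dcoset Ud not_uniq.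
rewrite wprod_cat [wp (del_nth _ _ ++ _)]wprod_cat => eq_del; apply: (not_dcoset_del_nth lt_i).
have -> : wp (del_nth i cu) = wp [::] * U * wp (d ++ rev (del_nth j d)).
  by rewrite gmul1 wprod_cat wprod_rev gmulA eq_del gmulKr.
by apply: in_dcosetM; rewrite ?all_cat ?all_rev ?Jd ?all_del_nth.
Qed.

Lemma conj_letter_in_J x d : pI x -> all pJ d -> conj U^-1 (sg x) = wp d ->
  exists2 j, pJ j & conj U^-1 (sg x) = sg j.
Proof.
move=> Ix Jd eq_d.
have [dr [Udr eq_dr size_dr sub_dr]] := exists_uniq_subword d.
have Jdr : all pJ dr by apply/allP => y /sub_dr /(allP Jd).
have Ux : uniq (refl_seq ([:: x] ++ cu)).
  by apply: uniq_refl_seq_cat_dcosetl; rewrite /= ?Ix.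
have eq_prod : wp ([:: x] ++ cu) = wp (cu ++ dr).
  by rewrite !wprod_cat eq_dr -eq_d /gconj ginvK wprod1 !gmulA gmulVr gmul1.
have := uniq_refl_seq_size Ux (uniq_refl_seq_cat_dcosetr Jdr Udr) eq_prod.
rewrite !size_cat /= => size_eq.
case: dr Jdr size_eq eq_dr {Udr size_dr sub_dr eq_prod} => [|j [|? ?]] /=; try lia.
by move=> /andP [Jj _] _ eq_j; exists j; rewrite // eq_d -eq_j gmulr1.
Qed.

(* [x :: c ++ cu] and [cu ++ d'] are reduced of the same length, so [x :: cu ++ d']
   is not; minimality of [cu] forces the cancelled letter into [d'], which puts
   [U^-1 x U] in [W_J]. *)
Lemma kilmoyer_head x c d : pI x -> all pI c -> uniq (refl_seq (x :: c)) -> all pJ d ->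
  wp (x :: c) * U = U * wp d -> exists2 j, pJ j & conj U^-1 (sg x) = sg j.
Proof.
move=> Ix Ic Uxc Jd eq_xc.
have [d' [Ud' eq_d' _ sub_d']] := exists_uniq_subword d.
have Jd' : all pJ d' by apply/allP => y /sub_d' /(allP Jd).
have Icu : uniq (refl_seq ((x :: c) ++ cu)) by apply: uniq_refl_seq_cat_dcosetl; rewrite /= ?Ix.
have Ucud' := uniq_refl_seq_cat_dcosetr Jd' Ud'.
have size_d' : size d' = (size c).+1.
  have := uniq_refl_seq_size Icu Ucud'; rewrite !wprod_cat eq_d' eq_xc => /(_ erefl).
  by rewrite !size_cat /=; lia.
have not_uniq : ~~ uniq (refl_seq ([:: x] ++ (cu ++ d'))).
  apply/negP => U_xcud'; have := uniq_refl_seq_min (b := c ++ cu) U_xcud'.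
  rewrite !wprod_cat eq_d' -eq_xc wprod1 /= !gmulA sg_invol gmul1 => /(_ erefl).
  by rewrite !size_cat size_d' /=; lia.
have [[|i] [j [//= _ lt_j]]] := refl_seq_cat_not_uniq (a := [:: x]) isT Ucud' not_uniq.
case: (ltnP j (size cu)) => [lt_jcu|le_cuj] eq_del.
  exfalso; apply: (not_dcoset_del_nth lt_jcu).
  have -> : wp (del_nth j cu) = wp [:: x] * U * wp [::].
    apply: (@gmulIr _ (wp d')); move: eq_del.
    by rewrite del_nth_catl // !wprod_cat wprod1 => <-; rewrite gmulr1 gmulA.
  by apply: in_dcosetM; rewrite /= ?Ix.
move: eq_del; rewrite -(subnKC le_cuj) del_nth_catr [wp (cu ++ d')]wprod_cat.
rewrite [wp (cu ++ _)]wprod_cat => eq_del.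
apply: (conj_letter_in_J (d := del_nth (j - size cu) d' ++ rev d')) => //.
  by rewrite all_cat all_rev Jd' all_del_nth.
rewrite wprod_cat wprod_rev /gconj ginvK -(gmulKl U (wp (del_nth _ _))) -eq_del.
by rewrite !gmulA gmulKr.
Qed.

(* Kilmoyer: [W_I] meets [U W_J U^-1] in the subgroup generated by the letters
   of [I] that [U] conjugates into [J]. *)
Lemma kilmoyer c d : all pI c -> uniq (refl_seq c) -> all pJ d -> wp c * U = U * wp d ->
  exists e, wp e = wp c /\
    {in e, forall x, pI x /\ exists2 j, pJ j & conj U^-1 (sg x) = sg j}.
Proof.
elim: c d => [|x c IH] d; first by exists [::].
move=> /= /andP [Ix Ic] Uxc Jd eq_xc.
have [j Jj conj_x] := kilmoyer_head Ix Ic Uxc Jd eq_xc.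
have [||e [eq_e K_e]] := IH (j :: d) Ic (uniq_refl_seq_behead Uxc); rewrite /= ?Jj //.
  rewrite -(gmulKl (sg x) (wp c)) ginv_sg -gmulA eq_xc -conj_x /gconj ginvK.
  by rewrite !gmulA gmulVr gmul1.
exists (x :: e); split; first by rewrite /= eq_e.
by move=> y; rewrite inE => /orP [/eqP ->|/K_e]; last exact; split=> //; exists j.
Qed.

End MinimalDoubleCosetWord.

(** * Reflections of dihedral parabolic subgroups *)

Definition dihedral_refl (s t : S) (x : W) :=
  exists n, x = wp (alt s t n.*2.+1) \/ x = wp (alt t s n.*2.+1).

Definition in_pair (s t : S) : pred S := [pred y | (y == s) || (y == t)].

Lemma dihedral_reflC s t x : dihedral_refl s t x -> dihedral_refl t s x.
Proof. by move=> [n [->|->]]; exists n; [right|left]. Qed.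

Lemma dihedral_refl_is_refl s t x : dihedral_refl s t x -> is_refl x.
Proof. by move=> [n [->|->]]; apply: alt_odd_refl. Qed.

Lemma all_in_pair_alt (s t : S) n : all (in_pair s t) (alt s t n).
Proof.
by apply/allP => y /mapP [i _ ->]; rewrite /in_pair /=; case: (odd i); rewrite eqxx ?orbT.
Qed.

Lemma dihedral_refl_word s t x : dihedral_refl s t x -> exists2 c, all (in_pair s t) c & wp c = x.
Proof.
move=> [n [->|->]]; first by exists (alt s t n.*2.+1); rewrite ?all_in_pair_alt.
exists (alt t s n.*2.+1) => //.
by apply/allP => y /(allP (all_in_pair_alt t s _)); rewrite /in_pair /= orbC.
Qed.

Lemma dihedral_refl_conj_sg s t x : dihedral_refl s t x -> dihedral_refl s t (conj (sg s) x).
Proof.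
have conj_sg_altS i : conj (sg s) (wp (alt s t i.+1.*2.+1)) = wp (alt t s i.*2.+1).
  by rewrite -conj_sg_alt conj_sgK.
move=> [[|n] [->|->]].
- by exists 0; left; rewrite /= !gmulr1 /gconj sg_invol gmul1 ginv_sg.
- by exists 1%N; left; rewrite conj_sg_alt.
- by exists n; right; rewrite conj_sg_altS.
- by exists n.+2; left; rewrite conj_sg_alt.
Qed.

Lemma dihedral_refl_conj_word s t c x : all (in_pair s t) c ->
  dihedral_refl s t x -> dihedral_refl s t (conj (wp c) x).
Proof.
elim: c x => [|y c IH] x /=; first by rewrite gconj1g.
move=> /andP [/orP [] /eqP -> Ic] /(IH _ Ic) Rx; rewrite -gconj_comp.
  exact: dihedral_refl_conj_sg.
exact/dihedral_reflC/dihedral_refl_conj_sg/dihedral_reflC.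
Qed.

Lemma dihedral_refl_conj_wordE s t c x : all (in_pair s t) c ->
  dihedral_refl s t (conj (wp c) x) <-> dihedral_refl s t x.
Proof.
move=> Ic; split; last exact: dihedral_refl_conj_word.
have Irc : all (in_pair s t) (rev c) by rewrite all_rev.
by move=> /(dihedral_refl_conj_word Irc); rewrite wprod_rev gconjK.
Qed.

Lemma dihedral_refl_conj_wordVE s t c x : all (in_pair s t) c ->
  dihedral_refl s t (conj (wp c)^-1 x) <-> dihedral_refl s t x.
Proof. by rewrite -wprod_rev -(all_rev (in_pair s t)); apply: dihedral_refl_conj_wordE. Qed.

Lemma conj_alt q (s t s' t' : S) n :
  conj q (sg s) = sg s' -> conj q (sg t) = sg t' -> conj q (wp (alt s t n)) = wp (alt s' t' n).
Proof.
elim: n s t s' t' => [|n IH] s t s' t' qs qt; first exact: gconj1.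
by rewrite !altS /= gconjM qs (IH t s t' s').
Qed.

Lemma dihedral_refl_conj q (s t s' t' : S) x :
  conj q (sg s) = sg s' -> conj q (sg t) = sg t' ->
  dihedral_refl s t x -> dihedral_refl s' t' (conj q x).
Proof. by move=> qs qt [n [->|->]]; exists n; [left|right]; apply: conj_alt. Qed.

Lemma dihedral_refl_conjE q (s t s' t' : S) x :
  conj q (sg s) = sg s' -> conj q (sg t) = sg t' ->
  dihedral_refl s' t' (conj q x) <-> dihedral_refl s t x.
Proof.
move=> qs qt; split; last exact: dihedral_refl_conj.
have qs' : conj q^-1 (sg s') = sg s by rewrite -qs gconjK.
have qt' : conj q^-1 (sg t') = sg t by rewrite -qt gconjK.
by move=> /(dihedral_refl_conj qs' qt'); rewrite gconjK.
Qed.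

Lemma dihedral_refl_in_pair (s t j1 j2 : S) x : in_pair s t j1 -> in_pair s t j2 -> j1 != j2 ->
  dihedral_refl j1 j2 x <-> dihedral_refl s t x.
Proof.
rewrite /in_pair /= => /orP [] /eqP -> /orP [] /eqP -> //; rewrite ?eqxx //.
by split; apply: dihedral_reflC.
Qed.

Lemma mem_refl_seq_alt (s t : S) k : m s t = Some k -> 0 < k ->
  forall z, z \in refl_seq (alt s t k) <-> dihedral_refl s t z.
Proof.
move=> st_k k_gt0 z; have st_order := cox_rel HW st_k.
have ts_order : gpow (sg t * sg s) k = 1 by apply: (cox_rel HW); rewrite (cox_sym HW).
rewrite refl_seq_alt; split; first by move=> /mapP [i _ ->]; exists i; left.
have mem_alt i : i < k -> wp (alt s t i.*2.+1) \in mkseq (fun i => wp (alt s t i.*2.+1)) k.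
  by move=> lt_ik; apply: map_f; rewrite mem_iota.
move=> [n [->|->]]; rewrite (divn_eq n k) wprod_alt_period_mul //.
  by rewrite mem_alt ?ltn_pmod.
by rewrite (wprod_alt_swap st_order) ?ltn_pmod // mem_alt //; have := ltn_pmod n k_gt0; lia.
Qed.

Section DihedralDoubleCoset.
Variables (s t s' t' : S) (U0 : W) (cu : seq S).
Local Notation pI := (in_pair s t).
Local Notation pJ := (in_pair s' t').
Hypothesis cu_dcoset : in_dcoset pI pJ U0 (wp cu).
Hypothesis cu_min : forall d, in_dcoset pI pJ U0 (wp d) -> size cu <= size d.
Local Notation U := (wp cu).

Lemma kilmoyer_dihedral_refl w : dihedral_refl s t w -> dihedral_refl s' t' (conj U^-1 w) ->
  exists e, wp e = w /\ {in e, forall x, pI x /\ exists2 j, pJ j & conj U^-1 (sg x) = sg j}.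
Proof.
move=> /dihedral_refl_word [c0 Ic0 <-] /dihedral_refl_word [d Jd eq_d].
have [c [Uc eq_c _ sub_c]] := exists_uniq_subword c0.
have Ic : all pI c by apply/allP => y /sub_c /(allP Ic0).
have eq_cd : wp c * U = U * wp d by rewrite eq_d eq_c /gconj ginvK !gmulA gmulVr gmul1.
by rewrite -eq_c; apply: (kilmoyer cu_dcoset cu_min Ic Uc Jd eq_cd).
Qed.

(* If [U] failed to conjugate the letter [r] into [J], every reflection of
   [W_I] conjugated into [W_J] would be a product of the other letter only,
   hence equal to it. *)
Lemma conj_min_dcoset_letter x y : x != y ->
  dihedral_refl s t x -> dihedral_refl s' t' (conj U^-1 x) ->
  dihedral_refl s t y -> dihedral_refl s' t' (conj U^-1 y) ->
  forall r, pI r -> exists2 j, pJ j & conj U^-1 (sg r) = sg j.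
Proof.
move=> neq_xy Rx Rx' Ry Ry' r Ir; apply: contrapT => not_conj_r.
have [r' Ir' other_r] : exists2 r', pI r' & forall z, pI z -> z != r -> z = r'.
  by case/orP: Ir => /eqP ->; [exists t | exists s]; rewrite /in_pair /= ?eqxx ?orbT //;
     move=> z /orP [] /eqP ->; rewrite ?eqxx //.
have only_r' w : dihedral_refl s t w -> dihedral_refl s' t' (conj U^-1 w) -> w = sg r'.
  move=> Rw Rw'; have [e [eq_e K_e]] := kilmoyer_dihedral_refl Rw Rw'.
  have e_r' : all (pred1 r') e.
    apply/allP => z /K_e [Iz conj_z] /=; apply/eqP/other_r => //.
    by apply: contraPneq not_conj_r => <-.
  rewrite -eq_e; have [e1|//] := wprod_one_letter e_r'.
  by case: (refl_neq1 (dihedral_refl_is_refl Rw)); rewrite -eq_e.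
by move: neq_xy; rewrite (only_r' x) // (only_r' y) // eqxx.
Qed.

End DihedralDoubleCoset.

(* Replacing [U] by the shortest element [cu] of [W_I U W_J], both generators
   of [W_I] are conjugated into [J] by [conj_min_dcoset_letter]. *)
Lemma dihedral_refl_conj_iff s t s' t' U x y : s != t -> x != y ->
  dihedral_refl s t x -> dihedral_refl s' t' (conj U^-1 x) ->
  dihedral_refl s t y -> dihedral_refl s' t' (conj U^-1 y) ->
  forall z, dihedral_refl s t z <-> dihedral_refl s' t' (conj U^-1 z).
Proof.
move=> neq_st neq_xy Rx Rx' Ry Ry'.
have [cu [cu_dcoset cu_min]] : exists cu, in_dcoset (in_pair s t) (in_pair s' t') U (wp cu) /\
    forall d, in_dcoset (in_pair s t) (in_pair s' t') U (wp d) -> size cu <= size d.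
  apply: ex_min_size_word; have [c <-] := cox_gen HW U.
  by exists c, [::], [::]; rewrite /= gmul1 gmulr1.
have [xa [ya [Ixa Jya eq_cu]]] := cu_dcoset.
(* Moving [z] by [xa] and [U] to the minimal [cu] only costs a conjugation by [ya]. *)
have conj_cu z : conj (wp cu)^-1 (conj (wp xa) z) = conj (wp ya)^-1 (conj U^-1 z).
  by rewrite !gconj_comp eq_cu !ginvM -!gmulA gmulV gmulr1.
have move_refl z : dihedral_refl s t z -> dihedral_refl s' t' (conj U^-1 z) ->
    dihedral_refl s t (conj (wp xa) z) /\ dihedral_refl s' t' (conj (wp cu)^-1 (conj (wp xa) z)).
  by rewrite conj_cu dihedral_refl_conj_wordE // dihedral_refl_conj_wordVE.
have [Rx1 Rx1'] := move_refl x Rx Rx'; have [Ry1 Ry1'] := move_refl y Ry Ry'.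
have neq_xy1 : conj (wp xa) x != conj (wp xa) y by rewrite (inj_eq (@gconj_inj _ _)).
have conj_gen r := conj_min_dcoset_letter cu_dcoset cu_min neq_xy1 Rx1 Rx1' Ry1 Ry1' (r := r).
have [j1 J1 conj_s] : exists2 j, in_pair s' t' j & conj (wp cu)^-1 (sg s) = sg j.
  by apply: conj_gen; rewrite /in_pair /= eqxx.
have [j2 J2 conj_t] : exists2 j, in_pair s' t' j & conj (wp cu)^-1 (sg t) = sg j.
  by apply: conj_gen; rewrite /in_pair /= eqxx orbT.
have neq_j : j1 != j2.
  apply: contraNneq neq_st => eq_j; apply/eqP/(cox_inj HW)/(@gconj_inj _ (wp cu)^-1).
  by rewrite conj_s conj_t eq_j.
move=> z; rewrite -(dihedral_refl_conj_wordE z Ixa) -(dihedral_refl_conjE _ conj_s conj_t).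
by rewrite (dihedral_refl_in_pair _ J1 J2 neq_j) conj_cu dihedral_refl_conj_wordVE.
Qed.

(** * Braid moves along a directed cycle *)

Definition conj_pair (x y : W) (s t : S) := exists q, conj q x = sg s /\ conj q y = sg t.

Lemma conj_pair_conj P x y s t : conj_pair (conj P x) (conj P y) s t <-> conj_pair x y s t.
Proof.
split=> [[q [qx qy]]|[q [qx qy]]]; first by exists (q * P); rewrite -!gconj_comp.
by exists (q * P^-1); rewrite -!gconj_comp !gconjK.
Qed.

Lemma conj_pairC x y s t : conj_pair x y s t <-> conj_pair y x t s.
Proof. by split=> [[q [qx qy]]|[q [qx qy]]]; exists q. Qed.

Definition refl_block (X : seq W) :=
  exists P s t, s != t /\ forall z, z \in X <-> dihedral_refl s t (conj P^-1 z).

Lemma refl_block_dichotomy X Y : refl_block X -> refl_block Y ->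
  X =i Y \/ forall x y, x \in X -> x \in Y -> y \in X -> y \in Y -> x = y.
Proof.
move=> [P [s [t [neq_st memX]]]] [P' [s' [t' [_ memY]]]].
have [[x [y [neq_xy xX xY yX yY]]]|no_pair] := pselect (exists x y,
    [/\ x != y, x \in X, x \in Y, y \in X & y \in Y]); last first.
  right=> x y xX xY yX yY; apply: contrapT => neq_xy; apply: no_pair.
  by exists x, y; split=> //; apply/eqP.
left; pose U := P^-1 * P'.
have conj_U z : conj U^-1 (conj P^-1 z) = conj P'^-1 z.
  by rewrite gconj_comp /U ginvM ginvK -gmulA gmulVr gmulr1.
have neq_xy' : conj P^-1 x != conj P^-1 y by rewrite (inj_eq (@gconj_inj _ _)).
have memXY := @dihedral_refl_conj_iff s t s' t' U _ _ neq_st neq_xy'.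
move: xX xY yX yY; rewrite !memX !memY -!conj_U => Rx Rx' Ry Ry' z.
by apply/idP/idP => [/memX|/memY]; rewrite ?memX ?memY -conj_U (memXY Rx Rx' Ry Ry').
Qed.

(* A braid move reverses a factor [X] of the reflection sequence, and [X]
   enumerates the reflections of a conjugate of the dihedral subgroup of the
   move, from the conjugate of [arc_s e] to that of [arc_t e]. *)
Definition braid_block (e : rarc S) (X : seq W) :=
  [/\ exists L1 L2, refl_seq (arc_src e) = L1 ++ X ++ L2 /\
                    refl_seq (arc_dst e) = L1 ++ rev X ++ L2,
      refl_block X &
      exists P, head 1 X = conj P (sg (arc_s e)) /\ last 1 X = conj P (sg (arc_t e))].

Lemma exists_braid_block w e : is_arc sg m w e -> exists X, braid_block e X.
Proof.
move=> [_ [_ [[neq_st _] [k [st_k [p [q [src_e dst_e]]]]]]]].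
have k_gt1 : 1 < k := cox_offdiag HW neq_st st_k.
have st_order := cox_rel HW st_k.
exists (map (conj (wp p)) (refl_seq (alt (arc_s e) (arc_t e) k))); split.
- exists (refl_seq p),
    (map (conj (wp p)) (map (conj (wp (alt (arc_s e) (arc_t e) k))) (refl_seq q))).
  rewrite src_e dst_e !refl_seq_cat !map_cat -(braid_relation st_order).
  by rewrite (refl_seq_alt_swap st_order) map_rev.
- exists (wp p), (arc_s e), (arc_t e); split=> // z.
  rewrite -(mem_refl_seq_alt st_k) ?(ltnW k_gt1) //.
  split=> [/mapP [y y_alt ->]|z_alt]; first by rewrite gconjK.
  by apply/mapP; exists (conj (wp p)^-1 z); rewrite ?gconjKV.
exists (wp p); split; first by case: k k_gt1 {st_k st_order src_e dst_e} => // k _; rewrite altS.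
by rewrite -(gconj1 (wp p)) last_map last_refl_seq_alt // ltnW.
Qed.

Section BraidBlock.
Variables (e : rarc S) (X : seq W).
Hypothesis block_X : braid_block e X.

Lemma braid_block_colored s t : colored sg s t e <-> conj_pair (head 1 X) (last 1 X) s t.
Proof. by have [_ _ [P [-> ->]]] := block_X; rewrite conj_pair_conj. Qed.

Lemma braid_block_asym : arc_s e != arc_t e -> X != rev X.
Proof.
have [_ _ [P [head_X last_X]]] := block_X.
apply: contra => /eqP eq_X; apply/eqP/(cox_inj HW)/(@gconj_inj _ P).
by rewrite -head_X -last_X {1}eq_X head_rev.
Qed.

Lemma trace_braid_block : uniq (refl_seq (arc_src e)) ->
  trace X (refl_seq (arc_src e)) = X /\ trace X (refl_seq (arc_dst e)) = rev X.
Proof.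
have [[L1 [L2 [-> ->]]] _ _] := block_X.
rewrite cat_uniq has_cat negb_or cat_uniq => /and4P [_ /andP [disj1 _] _ /andP [disj2 _]].
have trace_nil l : ~~ has (mem X) l -> trace X l = [::].
  by move=> /hasPn nX; apply/eqP; rewrite -(negbK (_ == _)) -has_filter; apply/hasPn.
have trace_X : trace X X = X by apply/all_filterP/allP.
by rewrite /trace !filter_cat filter_rev -!/(trace _ _) trace_X !trace_nil ?cats0 // has_sym.
Qed.

Lemma trace_braid_block_other (Y : seq W) :
  (forall x y, x \in X -> x \in Y -> y \in X -> y \in Y -> x = y) ->
  trace Y (refl_seq (arc_dst e)) = trace Y (refl_seq (arc_src e)).
Proof.
have [[L1 [L2 [-> ->]]] _ _] := block_X => meet_le1.
rewrite /trace !filter_cat filter_rev; congr (_ ++ _ ++ _).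
set F := [seq x <- X | x \in Y].
have memF k : k < size F -> nth 1 F k \in X /\ nth 1 F k \in Y.
  by move=> lt_k; have := mem_nth 1 lt_k; rewrite mem_filter => /andP [].
apply: (@eq_from_nth _ 1); rewrite size_rev // => i lt_i.
have lt_ri : size F - i.+1 < size F by rewrite ltn_subrL (leq_ltn_trans _ lt_i).
have [iX iY] := memF _ lt_i; have [rX rY] := memF _ lt_ri.
by rewrite nth_rev //; apply: meet_le1.
Qed.

End BraidBlock.

Section BraidCycle.
Variables (w : W) (C : seq (rarc S)) (s0 t0 : S).
Hypothesis cycle_C : directed_cycle sg m w C.
Local Notation n := (size C).
Local Notation E i := (nth (RArc [::] [::] s0 t0) C i).

Lemma cycle_size_gt0 : 0 < n.
Proof. by case: cycle_C. Qed.

Lemma cycle_arc i : i < n -> is_arc sg m w (E i).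
Proof. by case: cycle_C => _ [arcs _]; apply: arcs. Qed.

Lemma cycle_dst i : i < n -> arc_dst (E i) = arc_src (E (i.+1 %% n)).
Proof. by case: cycle_C => _ [_ [dsts _]]; apply: dsts. Qed.

Lemma cycle_block_ex i : exists X, i < n -> braid_block (E i) X.
Proof.
have [lt_in|_] := ltnP i n; last by exists [::].
by have [X block_X] := exists_braid_block (cycle_arc lt_in); exists X.
Qed.

Let B i := proj1_sig (cid (cycle_block_ex i)).
Let L i := refl_seq (arc_src (E i)).

Lemma cycle_braid_block i : i < n -> braid_block (E i) (B i).
Proof. exact: proj2_sig (cid (cycle_block_ex i)). Qed.

Lemma cycle_trace_block i : i < n -> trace (B i) (L i) = B i.
Proof.
move=> lt_in; have [R _] := cycle_arc lt_in.
exact: (trace_braid_block (cycle_braid_block lt_in) (reduced_uniq_refl_seq R)).1.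
Qed.

Lemma cycle_trace_block_next i : i < n -> trace (B i) (L (i.+1 %% n)) = rev (B i).
Proof.
move=> lt_in; have [R _] := cycle_arc lt_in; rewrite /L -cycle_dst //.
exact: (trace_braid_block (cycle_braid_block lt_in) (reduced_uniq_refl_seq R)).2.
Qed.

Lemma cycle_trace_other i j : i < n -> j < n ->
  B j =i B i \/ trace (B j) (L (i.+1 %% n)) = trace (B j) (L i).
Proof.
move=> lt_in lt_jn; have [_ block_i _] := cycle_braid_block lt_in.
have [_ block_j _] := cycle_braid_block lt_jn.
have [|meet_le1] := refl_block_dichotomy block_j block_i; first by left.
right; rewrite /L -cycle_dst //; apply: (trace_braid_block_other (cycle_braid_block lt_in)).
by move=> x y xi xj yi yj; apply: meet_le1.
Qed.

Lemma count_cycle_arcs (P : rarc S -> Prop) :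
  count (fun e => `[< P e >]) C = \sum_(i < n) `[< P (E i) >].
Proof. exact: count_sum_nth. Qed.

Lemma ncolored_balanced : ncolored sg s0 t0 C = ncolored sg t0 s0 C.
Proof.
pose q X := `[< conj_pair (head 1 X) (last 1 X) s0 t0 >].
have colored_q s t i : i < n -> `[< colored sg s t (E i) >] =
    `[< conj_pair (head 1 (B i)) (last 1 (B i)) s t >].
  by move=> lt_in; apply/asbool_equiv_eq/braid_block_colored/cycle_braid_block.
rewrite /ncolored !count_cycle_arcs.
rewrite (eq_bigr (fun i : 'I_n => q (B i) : nat)) => [|i _]; last by rewrite colored_q.
rewrite [RHS](eq_bigr (fun i : 'I_n => q (rev (B i)) : nat)) => [|i _]; last first.
  by rewrite colored_q // /q head_rev last_rev; congr nat_of_bool; apply/asbool_equiv_eq/conj_pairC.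
exact: (reversal_balance cycle_size_gt0 cycle_trace_block cycle_trace_block_next
                         cycle_trace_other (fun _ X => q X)).
Qed.

Lemma ncolored2_even : ~~ odd (ncolored2 sg s0 t0 C).
Proof.
pose q X := `[< conj_pair (head 1 X) (last 1 X) s0 t0 \/ conj_pair (head 1 X) (last 1 X) t0 s0 >].
rewrite /ncolored2 count_cycle_arcs (eq_bigr (fun i : 'I_n => q (B i) : nat)) => [|i _].
  apply: (sum_block_sym_even cycle_size_gt0 cycle_trace_block cycle_trace_block_next
                             cycle_trace_other).
    move=> X; rewrite /q head_rev last_rev; apply/asbool_equiv_eq.
    by split=> -[] /conj_pairC; [right|left|right|left].
  move=> i lt_in; apply: braid_block_asym (cycle_braid_block lt_in) _.
  by have [_ [_ [[]]]] := cycle_arc lt_in.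
have colored_i := braid_block_colored (cycle_braid_block (ltn_ord i)).
by congr nat_of_bool; apply/asbool_equiv_eq; rewrite !colored_i.
Qed.

End BraidCycle.

End CoxeterWords.

Theorem theorem2p3 (W : group) (S : finType) (sg : S -> W) (m : S -> S -> option nat)
  (HW : coxeter_system sg m) (w : W) (C : seq (@rarc S))
  (HC : directed_cycle sg m w C) (s t : S) (Hst : inM m s t) :
  ncolored sg s t C = ncolored sg t s C /\ ~~ odd (ncolored2 sg s t C).
Proof.
by split; [apply: ncolored_balanced HC | apply: ncolored2_even HC].
Qed.
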